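(* The category of pastures has fibered products: for any pastures $P_1,P_2,P$ and morphisms $f_1:P_1\to P$, $f_2:P_2\to P$, there is a pasture $P_1\times_P P_2$ with morphisms $\pi_1:P_1\times_PP_2\to P_1$, $\pi_2:P_1\times_PP_2\to P_2$ satisfying $f_1\circ\pi_1=f_2\circ\pi_2$, such that for every pasture $P'$ and morphisms $g_1:P'\to P_1$, $g_2:P'\to P_2$ with $f_1\circ g_1=f_2\circ g_2$ there is a unique morphism $g_*:P'\to P_1\times_PP_2$ with $\pi_1\circ g_*=g_1$ and $\pi_2\circ g_*=g_2$.
   Context: A pasture is a multiplicative monoid $P$ with a zero element $0$ (absorbing: $0\cdot x=0$ for all $x$) such that $P^\times=P\setminus\{0\}$ is an abelian group under the multiplication, together with an involution $x\mapsto -x$ of $P$ fixing $0$, and a subset $N_P\subseteq P^3$ (the nullset; one writes $a+b+c=0$ to mean $(a,b,c)\in N_P$) such that: (1) $N_P$ is invariant under permutations of the three coordinates; (2) if $a+b+c=0$ then $da+db+dc=0$ for every $d\in P$; (3) $a+b+0=0$ if and only if $a=-b$. A morphism of pastures $f:P_1\to P_2$ is a multiplicative map with $f(0)=0$, $f(1)=1$, $f(-a)=-f(a)$ for all $a$, and such that $f(a)+f(b)+f(c)=0$ in $N_{P_2}$ whenever $a+b+c=0$ in $N_{P_1}$. *)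

Set Implicit Arguments.

Record Pasture := {
  pcar :> Type;
  pzero : pcar;
  pone : pcar;
  pmul : pcar -> pcar -> pcar;
  pneg : pcar -> pcar;
  (* the nullset N_P ⊆ P^3 : pnull a b c means  a + b + c = 0 *)
  pnull : pcar -> pcar -> pcar -> Prop;
  pmulA : forall x y z, pmul x (pmul y z) = pmul (pmul x y) z;
  pmul1 : forall x, pmul pone x = x;
  pmul0 : forall x, pmul pzero x = pzero;
  pmulC : forall x y, pmul x y = pmul y x;
  pone_neq0 : pone <> pzero;
  pmul_neq0 : forall x y, x <> pzero -> y <> pzero -> pmul x y <> pzero;
  pinv_ex : forall x, x <> pzero -> exists y, pmul x y = pone;
  pnegK : forall x, pneg (pneg x) = x;
  pneg0 : pneg pzero = pzero;
  (* (1) invariance under permutations (transpositions (12),(23) generate S3) *)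
  pnull_swap12 : forall a b c, pnull a b c -> pnull b a c;
  pnull_swap23 : forall a b c, pnull a b c -> pnull a c b;
  pnull_scale : forall a b c d, pnull a b c -> pnull (pmul d a) (pmul d b) (pmul d c);
  pnull_0 : forall a b, pnull a b pzero <-> a = pneg b
}.

Record PastureMorph (P1 P2 : Pasture) := {
  pm_fun :> P1 -> P2;
  pm_zero : pm_fun (pzero P1) = pzero P2;
  pm_one : pm_fun (pone P1) = pone P2;
  pm_mul : forall x y, pm_fun (pmul P1 x y) = pmul P2 (pm_fun x) (pm_fun y);
  pm_neg : forall x, pm_fun (pneg P1 x) = pneg P2 (pm_fun x);
  pm_null : forall a b c, pnull P1 a b c ->
    pnull P2 (pm_fun a) (pm_fun b) (pm_fun c)
}.

(* The fibered product is the set-theoretic one, {(a, b) | f1 a = f2 b}, with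
   coordinatewise multiplication, negation and nullset; the universal property
   is then formal.  The only point needing an argument is that its nonzero
   elements form a group.  A morphism of pastures cannot send a unit to 0, so
   it reflects 0; hence (a, b) is zero as soon as one coordinate is, and for
   (a, b) nonzero both a and b are invertible.  Since morphisms send inverses to
   inverses and inverses are unique, f1 (a^-1) = f2 (b^-1), so (a^-1, b^-1) lies
   in the fibered product. *)
From Stdlib Require Import ProofIrrelevance Classical.

Set Implicit Arguments.

Lemma pmul_inv_unique (A : Pasture) (x y y' : A) :
  pmul A x y = pone A -> pmul A x y' = pone A -> y = y'.
Proof.
  intros hy hy'.
  rewrite <- (pmul1 A y), <- hy', (pmulC A x y'), <- pmulA, hy, pmulC, pmul1.
  reflexivity.
Qed.

Lemma pm_neq0 (A B : Pasture) (f : PastureMorph A B) (x : A) :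
  x <> pzero A -> f x <> pzero B.
Proof.
  intros hx hfx. destruct (pinv_ex A hx) as [y hy].
  apply (pone_neq0 B). rewrite <- (pm_one f), <- hy, pm_mul, hfx, pmul0.
  reflexivity.
Qed.

Lemma pm_eq0 (A B : Pasture) (f : PastureMorph A B) (x : A) :
  f x = pzero B -> x = pzero A.
Proof.
  intros hfx. apply NNPP. intros hx. exact (pm_neq0 f hx hfx).
Qed.

Section FiberedProduct.

Variables (P1 P2 P : Pasture) (f1 : PastureMorph P1 P) (f2 : PastureMorph P2 P).

Record fprod := FProd { fp1 : P1; fp2 : P2; fp_compat : f1 fp1 = f2 fp2 }.

Lemma fprod_eq (x y : fprod) : fp1 x = fp1 y -> fp2 x = fp2 y -> x = y.
Proof.
  destruct x as [a b h], y as [a' b' h']; simpl; intros ea eb; subst a' b'.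
  f_equal. apply proof_irrelevance.
Qed.

Definition fp_zero : fprod :=
  FProd (pzero P1) (pzero P2) ltac:(now rewrite !pm_zero).

Definition fp_one : fprod :=
  FProd (pone P1) (pone P2) ltac:(now rewrite !pm_one).

Definition fp_mul (x y : fprod) : fprod :=
  FProd (pmul P1 (fp1 x) (fp1 y)) (pmul P2 (fp2 x) (fp2 y))
    ltac:(now rewrite !pm_mul, !fp_compat).

Definition fp_neg (x : fprod) : fprod :=
  FProd (pneg P1 (fp1 x)) (pneg P2 (fp2 x)) ltac:(now rewrite !pm_neg, fp_compat).

Definition fp_null (a b c : fprod) : Prop :=
  pnull P1 (fp1 a) (fp1 b) (fp1 c) /\ pnull P2 (fp2 a) (fp2 b) (fp2 c).

Lemma fp1_eq0 (x : fprod) : fp1 x = pzero P1 -> x = fp_zero.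
Proof.
  intros hx. apply fprod_eq; [exact hx |].
  apply (pm_eq0 f2). now rewrite <- fp_compat, hx, pm_zero.
Qed.

Lemma fp2_eq0 (x : fprod) : fp2 x = pzero P2 -> x = fp_zero.
Proof.
  intros hx. apply fp1_eq0, (pm_eq0 f1). now rewrite fp_compat, hx, pm_zero.
Qed.

Lemma fp_mul_neq0 (x y : fprod) :
  x <> fp_zero -> y <> fp_zero -> fp_mul x y <> fp_zero.
Proof.
  intros hx hy hxy.
  apply (pmul_neq0 P1 (x := fp1 x) (y := fp1 y)).
  - intros e. exact (hx (fp1_eq0 x e)).
  - intros e. exact (hy (fp1_eq0 y e)).
  - exact (f_equal fp1 hxy).
Qed.

Lemma fp_inv_ex (x : fprod) : x <> fp_zero -> exists y, fp_mul x y = fp_one.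
Proof.
  intros hx.
  destruct (pinv_ex P1 (x := fp1 x)) as [y1 hy1].
  { intros e. exact (hx (fp1_eq0 x e)). }
  destruct (pinv_ex P2 (x := fp2 x)) as [y2 hy2].
  { intros e. exact (hx (fp2_eq0 x e)). }
  assert (compat : f1 y1 = f2 y2).
  { apply (@pmul_inv_unique P (f1 (fp1 x))).
    - now rewrite <- pm_mul, hy1, pm_one.
    - now rewrite fp_compat, <- pm_mul, hy2, pm_one. }
  exists (FProd y1 y2 compat). now apply fprod_eq.
Qed.

Lemma fp_null_0 (a b : fprod) : fp_null a b fp_zero <-> a = fp_neg b.
Proof.
  unfold fp_null; simpl; split.
  - intros [h1 h2]. apply fprod_eq; simpl; now apply pnull_0.
  - intros ->. simpl. split; now apply pnull_0.
Qed.

Definition fiber_pasture : Pasture.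
Proof.
  refine (@Build_Pasture fprod fp_zero fp_one fp_mul fp_neg fp_null
    _ _ _ _ _ fp_mul_neq0 fp_inv_ex _ _ _ _ _ fp_null_0).
  - intros x y z. apply fprod_eq; simpl; apply pmulA.
  - intros x. apply fprod_eq; simpl; apply pmul1.
  - intros x. apply fprod_eq; simpl; apply pmul0.
  - intros x y. apply fprod_eq; simpl; apply pmulC.
  - intros e. exact (pone_neq0 P1 (f_equal fp1 e)).
  - intros x. apply fprod_eq; simpl; apply pnegK.
  - apply fprod_eq; simpl; apply pneg0.
  - intros a b c [h1 h2]; split; now apply pnull_swap12.
  - intros a b c [h1 h2]; split; now apply pnull_swap23.
  - intros a b c d [h1 h2]; split; now apply pnull_scale.
Defined.

Definition fp_pi1 : PastureMorph fiber_pasture P1.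
Proof.
  refine (@Build_PastureMorph fiber_pasture P1 fp1 _ _ _ _ _); try reflexivity.
  intros a b c [h1 _]; exact h1.
Defined.

Definition fp_pi2 : PastureMorph fiber_pasture P2.
Proof.
  refine (@Build_PastureMorph fiber_pasture P2 fp2 _ _ _ _ _); try reflexivity.
  intros a b c [_ h2]; exact h2.
Defined.

Lemma fp_pi_compat (q : fiber_pasture) : f1 (fp_pi1 q) = f2 (fp_pi2 q).
Proof. exact (fp_compat q). Qed.

Variables (P' : Pasture) (g1 : PastureMorph P' P1) (g2 : PastureMorph P' P2).
Hypothesis g_compat : forall x : P', f1 (g1 x) = f2 (g2 x).

Definition fp_pair : PastureMorph P' fiber_pasture.
Proof.
  refine (@Build_PastureMorph P' fiber_pasture
    (fun x => FProd (g1 x) (g2 x) (g_compat x)) _ _ _ _ _).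
  - apply fprod_eq; apply pm_zero.
  - apply fprod_eq; apply pm_one.
  - intros x y. apply fprod_eq; apply pm_mul.
  - intros x. apply fprod_eq; apply pm_neg.
  - intros a b c h. split; now apply pm_null.
Defined.

Lemma fp_pi1_pair (x : P') : fp_pi1 (fp_pair x) = g1 x.
Proof. reflexivity. Qed.

Lemma fp_pi2_pair (x : P') : fp_pi2 (fp_pair x) = g2 x.
Proof. reflexivity. Qed.

Lemma fp_pair_unique (h : PastureMorph P' fiber_pasture) :
  (forall x, fp_pi1 (h x) = g1 x) -> (forall x, fp_pi2 (h x) = g2 x) ->
  forall x, h x = fp_pair x.
Proof. intros h1 h2 x. apply fprod_eq; [apply h1 | apply h2]. Qed.

End FiberedProduct.

Theorem theorem2p5 :
  forall (P1 P2 P : Pasture) (f1 : PastureMorph P1 P) (f2 : PastureMorph P2 P),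
  exists (Q : Pasture) (pi1 : PastureMorph Q P1) (pi2 : PastureMorph Q P2),
    (forall q : Q, f1 (pi1 q) = f2 (pi2 q)) /\
    (forall (P' : Pasture) (g1 : PastureMorph P' P1) (g2 : PastureMorph P' P2),
       (forall x : P', f1 (g1 x) = f2 (g2 x)) ->
       exists g : PastureMorph P' Q,
         (forall x : P', pi1 (g x) = g1 x) /\ (forall x : P', pi2 (g x) = g2 x) /\
         (forall h : PastureMorph P' Q,
            (forall x : P', pi1 (h x) = g1 x) -> (forall x : P', pi2 (h x) = g2 x) ->
            forall x : P', h x = g x)).
Proof.
  intros P1 P2 P f1 f2.
  exists (fiber_pasture f1 f2), (fp_pi1 f1 f2), (fp_pi2 f1 f2).
  split; [apply fp_pi_compat |].
  intros P' g1 g2 hg.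
  exists (fp_pair f1 f2 g1 g2 hg).
  split; [apply fp_pi1_pair |].
  split; [apply fp_pi2_pair |].
  apply fp_pair_unique.
Qed.
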